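(* Let $\alpha>0$ and $T^{(1)}_\lambda(\alpha,\Delta t)=(1-\alpha\Delta t\lambda)^{-1}$. The explicit Euler time integration of $dy/dt=T^{(1)}_\lambda(\alpha,\Delta t)\lambda y$, namely $y^{n+1}=y^n+\Delta t\,T^{(1)}_\lambda(\alpha,\Delta t)\lambda y^n$, is unconditionally stable, i.e. $|y^n+\Delta t\,T^{(1)}_\lambda(\alpha,\Delta t)\lambda y^n|\leq|y^n|$ for all $\Delta t>0$, all $\lambda\in\mathbb{C}$ with $\mathrm{Re}(\lambda)\leq 0$ and all $y^n\in\mathbb{C}$, if and only if $\alpha\geq 0.5$. *)

From HB Require Import structures.
From mathcomp Require Import all_boot all_order all_algebra.
From mathcomp Require Import complex.
Set Implicit Arguments. Unset Strict Implicit. Unset Printing Implicit Defensive.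
Import Order.TTheory GRing.Theory Num.Theory.
Local Open Scope ring_scope.
Local Open Scope complex_scope.

Definition T1 (R : rcfType) (alpha dt : R) (lam : R[i]) : R[i] :=
  (1 - alpha%:C * dt%:C * lam)^-1.

Definition euler_step (R : rcfType) (alpha dt : R) (lam y : R[i]) : R[i] :=
  y + dt%:C * T1 alpha dt lam * lam * y.

From HB Require Import structures.
From mathcomp Require Import all_boot all_order all_algebra.
From mathcomp Require Import complex.
From mathcomp Require Import ring lra.
Import Order.TTheory GRing.Theory Num.Theory.
Local Open Scope ring_scope.
Local Open Scope complex_scope.

(* One Euler step multiplies y^n by the stability function
   R(z) = (1 + (1 - alpha) z) / (1 - alpha z) of z = dt lambda, and
   |1 + (1 - alpha) z|^2 - |1 - alpha z|^2 = 2 Re z + (1 - 2 alpha) |z|^2.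
   For alpha >= 1/2 both terms are nonpositive on the left half-plane; for
   alpha < 1/2 the quadratic term wins on a large negative real z. *)

Lemma ler_normc (R : rcfType) (u v : R[i]) :
  (`|u| <= `|v|) =
  (complex.Re u ^+ 2 + complex.Im u ^+ 2 <= complex.Re v ^+ 2 + complex.Im v ^+ 2).
Proof. by rewrite -ler_sqr ?nnegrE // -!add_Re2_Im2 lecR. Qed.

Lemma Re_realcM (R : rcfType) (k : R) (z : R[i]) :
  complex.Re (k%:C * z) = k * complex.Re z.
Proof. by case: z => a b /=; rewrite mul0r subr0. Qed.

Section StabilityFunction.

Context {R : rcfType} (alpha : R).

Definition stability_fun (z : R[i]) : R[i] :=
  (1 + (1 - alpha%:C) * z) / (1 - alpha%:C * z).

Lemma stability_denom_neq0 (z : R[i]) :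
  0 <= alpha -> complex.Re z <= 0 -> 1 - alpha%:C * z != 0.
Proof.
case: z => a b /= alpha_ge0 a_le0; apply/eqP => /(congr1 (@complex.Re R)) /=.
rewrite mul0r subr0 => /eqP; rewrite subr_eq0 => /eqP one_eq.
have : alpha * a <= 0 by rewrite mulr_ge0_le0.
by rewrite -one_eq ler10.
Qed.

Lemma norm_stability_fun_le1 (z : R[i]) : 1 - alpha%:C * z != 0 ->
  (`|stability_fun z| <= 1) =
  (2 * complex.Re z + (1 - 2 * alpha) * (complex.Re z ^+ 2 + complex.Im z ^+ 2) <= 0).
Proof.
case: z => a b denom_neq0.
rewrite normf_div ler_pdivrMr ?normr_gt0 // mul1r ler_normc -subr_le0 /=.
by congr (_ <= 0); ring.
Qed.

Lemma stability_fun_le1 (z : R[i]) :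
  1 / 2 <= alpha -> complex.Re z <= 0 -> `|stability_fun z| <= 1.
Proof.
move=> half_le_alpha Rez_le0.
rewrite norm_stability_fun_le1 ?stability_denom_neq0 //; last by lra.
have : 0 <= (2 * alpha - 1) * (complex.Re z ^+ 2 + complex.Im z ^+ 2).
  by apply: mulr_ge0; [lra | rewrite addr_ge0 ?sqr_ge0].
lra.
Qed.

Lemma stability_fun_not_le1 : 0 <= alpha -> alpha < 1 / 2 ->
  exists2 t : R, 0 < t & ~~ (`|stability_fun (- t%:C)| <= 1).
Proof.
move=> alpha_ge0 alpha_lt_half.
have gap_gt0 : 0 < 1 - 2 * alpha by lra.
(* the witness t makes (1 - 2 alpha) t^2 - 2 t = 2 t positive *)
exists (4 / (1 - 2 * alpha)); first by rewrite divr_gt0.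
set t := 4 / _; have t_gt0 : 0 < t by rewrite divr_gt0.
have gap_t : (1 - 2 * alpha) * t = 4 by rewrite mulrC divfK ?gt_eqF.
rewrite norm_stability_fun_le1 ?stability_denom_neq0 //=; last by lra.
rewrite -ltNge; nra.
Qed.

End StabilityFunction.

Lemma norm_euler_step (R : rcfType) (alpha dt : R) (lam y : R[i]) :
  0 <= alpha -> 0 <= dt -> complex.Re lam <= 0 ->
  `|euler_step alpha dt lam y| = `|stability_fun alpha (dt%:C * lam)| * `|y|.
Proof.
move=> alpha_ge0 dt_ge0 Relam_le0.
have denom_neq0 : 1 - alpha%:C * (dt%:C * lam) != 0.
  by rewrite stability_denom_neq0 // Re_realcM mulr_ge0_le0.
by rewrite -normrM /euler_step /T1 /stability_fun; congr `|_|; field.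
Qed.

Theorem lemma1 (R : rcfType) (alpha : R) (halpha : 0 < alpha) :
  (forall (dt : R) (lam y : R[i]), 0 < dt -> Re lam <= 0 ->
     `|euler_step alpha dt lam y| <= `|y|)
  <-> 1 / 2 <= alpha.
Proof.
have alpha_ge0 : 0 <= alpha by rewrite ltW.
split=> [stable | half_le_alpha dt lam y dt_gt0].
- rewrite leNgt; apply/negP => /(stability_fun_not_le1 _ alpha_ge0) [t t_gt0 unstable].
  have Re_neg1 : complex.Re (-1 : R[i]) <= 0 by rewrite /= lerN10.
  have t_ge0 := ltW t_gt0.
  have := stable t (-1) 1 t_gt0; rewrite -complexRe lecR => /(_ Re_neg1).
  by rewrite norm_euler_step // normr1 mulr1 mulrN1 (negbTE unstable).
- rewrite -complexRe lecR => Relam_le0.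
  have dt_ge0 := ltW dt_gt0.
  by rewrite norm_euler_step // ler_piMl // stability_fun_le1 // Re_realcM mulr_ge0_le0.
Qed.
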